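(* Let $A,B\in\mathbb{R}_+^{m\times n}$. Then: (1) $\hat\rho(A,B)\le\rho(A,B)$. (2) Let $\mathbf{y}$ be weakly optimal. If $A\mathbf{y}>\mathbf{0}$ or $B\mathbf{y}>\mathbf{0}$ (all coordinates positive), then $\rho(A,B)=\hat\rho(A,B)$ and $\mathbf{y}$ is optimal. (3) If $A>0$ or $B>0$ (all entries positive), then $\rho(A,B)=\hat\rho(A,B)$ and every weakly optimal vector is optimal. (4) If $B_l\in\mathbb{R}^{m\times n}$, $l\in\mathbb{N}$, have all entries positive and $\lim_{l\to\infty}B_l=B$, then $\lim_{l\to\infty}\rho(A,B_l)=\hat\rho(A,B)$ (in $[0,\infty]$). (5) If $A_l\in\mathbb{R}^{m\times n}$, $l\in\mathbb{N}$, have all entries positive, $\lim_{l\to\infty}A_l=A$, and $B$ has no zero row, then $\lim_{l\to\infty}\rho(A_l,B)=\rho(A,B)$.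
   Context: $[m]=\{1,\dots,m\}$. For $A,B\in\mathbb{R}_+^{m\times n}$ (entrywise nonnegative real matrices) and $\mathbf{x}\in\mathbb{R}^n_+\setminus\{\mathbf{0}\}$, set $r(A,B,\mathbf{x})=\max_{i\in[m]}\frac{(A\mathbf{x})_i}{(B\mathbf{x})_i}\in[0,\infty]$ with the conventions $\frac00=0$ and $\frac c0=\infty$ for $c>0$; equivalently $r(A,B,\mathbf{x})=\inf\{t\ge 0: A\mathbf{x}\le tB\mathbf{x}\}$ (with $\inf\emptyset=\infty$). The Collatz–Wielandt quotient is $\rho(A,B)=\inf\{r(A,B,\mathbf{x}):\mathbf{x}>\mathbf{0}\}$ (infimum over vectors with all coordinates positive) and the weak Collatz–Wielandt quotient is $\hat\rho(A,B)=\inf\{r(A,B,\mathbf{x}):\mathbf{x}\in\mathbb{R}^n_+\setminus\{\mathbf{0}\}\}$. A vector $\mathbf{y}\in\mathbb{R}^n_+\setminus\{\mathbf{0}\}$ is weakly optimal if $r(A,B,\mathbf{y})=\hat\rho(A,B)$; it is optimal if $r(A,B,\mathbf{y})=\rho(A,B)$ and there is a sequence $\mathbf{y}_k>\mathbf{0}$ with $\mathbf{y}_k\to\mathbf{y}$ and $r(A,B,\mathbf{y}_k)\to\rho(A,B)$. *)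

From Stdlib Require Import Reals Lra ClassicalEpsilon.
Open Scope R_scope.

(* Extended nonnegative values [0, oo]: finite reals plus +oo. *)
Inductive ER := Fin (x : R) | PInf.

Definition ER_le (a b : ER) : Prop :=
  match a, b with
  | _, PInf => True
  | PInf, Fin _ => False
  | Fin x, Fin y => x <= y
  end.

Definition ER_max (a b : ER) : ER :=
  match a, b with
  | PInf, _ => PInf
  | _, PInf => PInf
  | Fin x, Fin y => Fin (Rmax x y)
  end.

Definition is_ER_inf (S : ER -> Prop) (v : ER) : Prop :=
  (forall s, S s -> ER_le v s) /\
  (forall w, (forall s, S s -> ER_le w s) -> ER_le w v).

(* the infimum (inf of the empty set is +oo); chosen by classical choice *)
Definition ER_inf (S : ER -> Prop) : ER :=
  epsilon (inhabits PInf) (is_ER_inf S).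

Definition ER_cv (u : nat -> ER) (v : ER) : Prop :=
  match v with
  | Fin L => forall eps, eps > 0 -> exists N, forall k, (N <= k)%nat ->
               exists x, u k = Fin x /\ Rabs (x - L) < eps
  | PInf => forall M, exists N, forall k, (N <= k)%nat -> ER_le (Fin M) (u k)
  end.

(* Matrices / vectors: entries indexed from 0; only i < m, j < n matter. *)
Definition mat := nat -> nat -> R.
Definition vec := nat -> R.

Fixpoint rsum (n : nat) (f : nat -> R) : R :=
  match n with O => 0 | S k => rsum k f + f k end.

Definition mv (n : nat) (A : mat) (x : vec) (i : nat) : R :=
  rsum n (fun j => A i j * x j).

(* a / b with conventions 0/0 = 0 and c/0 = oo for c > 0 *)
Definition ratio (a b : R) : ER :=
  if Req_EM_T b 0 then (if Req_EM_T a 0 then Fin 0 else PInf) else Fin (a / b).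

Fixpoint ER_maxn (m : nat) (f : nat -> ER) : ER :=
  match m with O => Fin 0 | S k => ER_max (ER_maxn k f) (f k) end.

Definition rq (m n : nat) (A B : mat) (x : vec) : ER :=
  ER_maxn m (fun i => ratio (mv n A x i) (mv n B x i)).

Definition nonneg_mat (m n : nat) (A : mat) : Prop :=
  forall i j, (i < m)%nat -> (j < n)%nat -> 0 <= A i j.
Definition pos_mat (m n : nat) (A : mat) : Prop :=
  forall i j, (i < m)%nat -> (j < n)%nat -> 0 < A i j.
Definition pos_vec (n : nat) (x : vec) : Prop :=
  forall j, (j < n)%nat -> 0 < x j.
Definition nonneg_nz_vec (n : nat) (x : vec) : Prop :=
  (forall j, (j < n)%nat -> 0 <= x j) /\ (exists j, (j < n)%nat /\ x j <> 0).
Definition no_zero_row (m n : nat) (B : mat) : Prop :=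
  forall i, (i < m)%nat -> exists j, (j < n)%nat /\ B i j <> 0.

Definition rho (m n : nat) (A B : mat) : ER :=
  ER_inf (fun t => exists x, pos_vec n x /\ t = rq m n A B x).
Definition rhohat (m n : nat) (A B : mat) : ER :=
  ER_inf (fun t => exists x, nonneg_nz_vec n x /\ t = rq m n A B x).

Definition weakly_optimal (m n : nat) (A B : mat) (y : vec) : Prop :=
  nonneg_nz_vec n y /\ rq m n A B y = rhohat m n A B.

Definition optimal (m n : nat) (A B : mat) (y : vec) : Prop :=
  nonneg_nz_vec n y /\ rq m n A B y = rho m n A B /\
  exists yk : nat -> vec,
    (forall k, pos_vec n (yk k)) /\
    (forall j, (j < n)%nat -> Un_cv (fun k => yk k j) (y j)) /\
    ER_cv (fun k => rq m n A B (yk k)) (rho m n A B).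

Definition mat_cv (m n : nat) (Al : nat -> mat) (A : mat) : Prop :=
  forall i j, (i < m)%nat -> (j < n)%nat -> Un_cv (fun l => Al l i j) (A i j).

(* Positive vectors are admissible for the weak quotient, so rhohat <= rho.  If every row
   of A y or every row of B y is positive, no row ratio of y is 0/0, so the ratios of the
   positive vectors y + 1/(k+1) converge to r(A,B,y); this gives rho <= r(A,B,y) and the
   optimality of a weakly optimal y, and positive A or B makes it hold for every y.
   For (4), an almost optimal y for B is almost optimal for B_l once l is large; conversely,
   almost optimal positive vectors for the B_l, normalised to the simplex, accumulate at a
   vector whose ratio for B is no larger, because the sublevel sets {x | A x <= t B x} are
   closed.  For (5), B x has no zero row when x > 0, so r(A_l,B,x) -> r(A,B,x); and
   A <= c A_l entrywise for any c > 1 and l large, whence rho(A,B) <= c rho(A_l,B). *)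

From Stdlib Require Import Reals Lra Lia Classical ClassicalEpsilon.
Open Scope R_scope.

Lemma ER_le_refl a : ER_le a a.
Proof. destruct a; simpl; lra. Qed.

Lemma ER_le_trans a b c : ER_le a b -> ER_le b c -> ER_le a c.
Proof. destruct a, b, c; simpl; try tauto; lra. Qed.

Lemma ER_le_antisym a b : ER_le a b -> ER_le b a -> a = b.
Proof. destruct a, b; simpl; try tauto; intros; f_equal; lra. Qed.

Definition ER_lt (a b : ER) : Prop := ~ ER_le b a.

Lemma ER_lt_le a b : ER_lt a b -> ER_le a b.
Proof. unfold ER_lt; destruct a, b; simpl; try tauto; lra. Qed.

Lemma ER_lt_Fin_pos v t : ER_le (Fin 0) v -> ER_lt v (Fin t) -> 0 < t.
Proof. unfold ER_lt; destruct v; simpl; try tauto; lra. Qed.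

Lemma ER_lt_Fin_interpolate v t : ER_lt (Fin t) v -> exists t', t < t' /\ ER_lt (Fin t') v.
Proof.
  unfold ER_lt; destruct v as [L|]; simpl; intros H.
  - exists ((t + L) / 2); split; lra.
  - exists (t + 1); split; [lra | tauto].
Qed.

Lemma ER_max_le_iff a b v : ER_le (ER_max a b) v <-> ER_le a v /\ ER_le b v.
Proof.
  destruct a, b, v; simpl; try tauto.
  split.
  - intros H; split; eapply Rle_trans; [apply Rmax_l | exact H | apply Rmax_r | exact H].
  - intros [H1 H2]; apply Rmax_lub; auto.
Qed.

Lemma ER_maxn_le_iff m f v :
  ER_le (ER_maxn m f) v <-> ER_le (Fin 0) v /\ (forall i, (i < m)%nat -> ER_le (f i) v).
Proof.
  induction m as [|m IH]; simpl.
  - split; [intros H; split; [exact H | intros; lia] | tauto].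
  - rewrite ER_max_le_iff, IH. split.
    + intros [[H0 Hf] Hm]; split; [exact H0|].
      intros i Hi; destruct (Nat.eq_dec i m); [subst; exact Hm | apply Hf; lia].
    + intros [H0 Hf]; repeat split; auto.
Qed.

Section Infimum.

Variable S : ER -> Prop.
Hypothesis S_ge0 : forall s, S s -> ER_le (Fin 0) s.

Lemma ER_inf_exists : exists v, is_ER_inf S v.
Proof.
  destruct (classic (exists x, S (Fin x))) as [[x0 Hx0] | Hfin].
  - (* the infimum of the finite part is minus the supremum of its negation *)
    set (E := fun y => S (Fin (- y))).
    assert (HE : exists y, E y) by (exists (- x0); unfold E; rewrite Ropp_involutive; exact Hx0).
    assert (Hb : bound E) by (exists 0; intros y Hy; specialize (S_ge0 _ Hy); simpl in S_ge0; lra).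
    destruct (completeness E Hb HE) as [M [HubM HlubM]].
    exists (Fin (- M)); split.
    + intros [x|] Hs; simpl; [|exact I].
      assert (E (- x)) by (unfold E; rewrite Ropp_involutive; exact Hs).
      specialize (HubM _ H); lra.
    + intros [z|] Hw; simpl.
      * enough (M <= - z) by lra.
        apply HlubM; intros y Hy; specialize (Hw _ Hy); simpl in Hw; lra.
      * exact (Hw _ Hx0).
  - exists PInf; split.
    + intros [x|] Hs; simpl; [apply Hfin; eauto | exact I].
    + intros [z|] _; simpl; exact I.
Qed.

Lemma ER_inf_spec : is_ER_inf S (ER_inf S).
Proof. exact (epsilon_spec _ _ ER_inf_exists). Qed.

Lemma ER_inf_le s : S s -> ER_le (ER_inf S) s.
Proof. exact (proj1 ER_inf_spec s). Qed.

Lemma ER_le_inf w : (forall s, S s -> ER_le w s) -> ER_le w (ER_inf S).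
Proof. exact (proj2 ER_inf_spec w). Qed.

Lemma ER_inf_lt t : ER_lt (ER_inf S) (Fin t) -> exists s, S s /\ ER_lt s (Fin t).
Proof.
  intros Hlt; apply NNPP; intros Hno; apply Hlt, ER_le_inf.
  intros s Hs; apply NNPP; intros Hn; apply Hno; exists s; split; assumption.
Qed.

End Infimum.

Definition nonneg_vec (n : nat) (x : vec) : Prop := forall j, (j < n)%nat -> 0 <= x j.

Definition vec_cv (n : nat) (xk : nat -> vec) (x : vec) : Prop :=
  forall j, (j < n)%nat -> Un_cv (fun k => xk k j) (x j).

Lemma Un_cv_const c : Un_cv (fun _ => c) c.
Proof.
  intros eps He; exists 0%nat; intros; unfold R_dist.
  rewrite Rminus_diag, Rabs_R0; exact He.
Qed.

Lemma Un_cv_scal c u l : Un_cv u l -> Un_cv (fun k => c * u k) (c * l).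
Proof. intros H; exact (CV_mult _ _ _ _ (Un_cv_const c) H). Qed.

Lemma Un_cv_subseq u l phi :
  Un_cv u l -> (forall k, (k <= phi k)%nat) -> Un_cv (fun k => u (phi k)) l.
Proof.
  intros H Hphi eps He; destruct (H eps He) as [N HN].
  exists N; intros k Hk; apply HN; specialize (Hphi k); lia.
Qed.

Lemma mat_cv_const m n A : mat_cv m n (fun _ => A) A.
Proof. intros i j _ _; apply Un_cv_const. Qed.

Lemma vec_cv_const n x : vec_cv n (fun _ => x) x.
Proof. intros j _; apply Un_cv_const. Qed.

Lemma rsum_ext n f g : (forall j, (j < n)%nat -> f j = g j) -> rsum n f = rsum n g.
Proof.
  induction n as [|n IH]; simpl; intros H; [reflexivity|].
  rewrite IH by (intros; apply H; lia); rewrite H by lia; reflexivity.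
Qed.

Lemma rsum_le n f g : (forall j, (j < n)%nat -> f j <= g j) -> rsum n f <= rsum n g.
Proof.
  induction n as [|n IH]; simpl; intros H; [lra|].
  apply Rplus_le_compat; [apply IH; intros; apply H; lia | apply H; lia].
Qed.

Lemma rsum_ge0 n f : (forall j, (j < n)%nat -> 0 <= f j) -> 0 <= rsum n f.
Proof.
  induction n as [|n IH]; simpl; intros H; [lra|].
  assert (0 <= f n) by (apply H; lia).
  assert (0 <= rsum n f) by (apply IH; intros; apply H; lia); lra.
Qed.

Lemma rsum_ge_term n f j :
  (forall j, (j < n)%nat -> 0 <= f j) -> (j < n)%nat -> f j <= rsum n f.
Proof.
  induction n as [|n IH]; simpl; intros H Hj; [lia|].
  destruct (Nat.eq_dec j n) as [->|Hne].
  - assert (0 <= rsum n f) by (apply rsum_ge0; intros; apply H; lia); lra.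
  - assert (f j <= rsum n f) by (apply IH; [intros; apply H|]; lia).
    assert (0 <= f n) by (apply H; lia); lra.
Qed.

Lemma rsum_scal n c f : rsum n (fun j => c * f j) = c * rsum n f.
Proof. induction n as [|n IH]; simpl; [ring | rewrite IH; ring]. Qed.

Lemma rsum_cv n (fk : nat -> vec) (f : vec) :
  vec_cv n fk f -> Un_cv (fun k => rsum n (fk k)) (rsum n f).
Proof.
  induction n as [|n IH]; simpl; intros H; [apply Un_cv_const|].
  apply CV_plus; [apply IH; intros j Hj; apply H; lia | apply H; lia].
Qed.

Lemma mv_ge0 m n A x i :
  nonneg_mat m n A -> nonneg_vec n x -> (i < m)%nat -> 0 <= mv n A x i.
Proof. intros HA Hx Hi; apply rsum_ge0; intros j Hj; apply Rmult_le_pos; auto. Qed.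

Lemma mv_pos m n A x i j :
  nonneg_mat m n A -> nonneg_vec n x -> (i < m)%nat -> (j < n)%nat ->
  0 < A i j * x j -> 0 < mv n A x i.
Proof.
  intros HA Hx Hi Hj Hpos; eapply Rlt_le_trans; [exact Hpos|].
  apply (rsum_ge_term n (fun j => A i j * x j)); [intros; apply Rmult_le_pos; auto | exact Hj].
Qed.

Lemma mv_scal n A c x i : mv n A (fun j => c * x j) i = c * mv n A x i.
Proof. unfold mv; rewrite <- rsum_scal; apply rsum_ext; intros; ring. Qed.

Lemma mv_le_scal n A A' c x i :
  nonneg_vec n x -> (forall j, (j < n)%nat -> A i j <= c * A' i j) ->
  mv n A x i <= c * mv n A' x i.
Proof.
  intros Hx H; unfold mv; rewrite <- rsum_scal; apply rsum_le; intros j Hj.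
  rewrite <- Rmult_assoc; apply Rmult_le_compat_r; auto.
Qed.

Lemma mv_cv m n Ak A xk x i :
  mat_cv m n Ak A -> vec_cv n xk x -> (i < m)%nat ->
  Un_cv (fun k => mv n (Ak k) (xk k) i) (mv n A x i).
Proof.
  intros HA Hx Hi; apply (rsum_cv n (fun k j => Ak k i j * xk k j)).
  intros j Hj; apply CV_mult; auto.
Qed.

Lemma rq_ge0 m n A B x : ER_le (Fin 0) (rq m n A B x).
Proof. exact (proj1 (proj1 (ER_maxn_le_iff _ _ _) (ER_le_refl _))). Qed.

Lemma ratio_le_iff a b s :
  0 <= a -> 0 <= b -> 0 <= s -> ER_le (ratio a b) (Fin s) <-> a <= s * b.
Proof.
  intros Ha Hb Hs; unfold ratio.
  destruct (Req_EM_T b 0) as [->|Hb0].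
  - destruct (Req_EM_T a 0); simpl; split; intros; try lra; tauto.
  - simpl; assert (Hdiv : a / b * b = a) by (field; exact Hb0).
    split; intros H.
    + rewrite <- Hdiv; apply Rmult_le_compat_r; lra.
    + apply Rmult_le_reg_r with b; lra.
Qed.

Lemma rq_le_iff m n A B x s :
  nonneg_mat m n A -> nonneg_mat m n B -> nonneg_vec n x -> 0 <= s ->
  ER_le (rq m n A B x) (Fin s) <-> (forall i, (i < m)%nat -> mv n A x i <= s * mv n B x i).
Proof.
  intros HA HB Hx Hs; unfold rq; rewrite ER_maxn_le_iff; simpl.
  split.
  - intros [_ H] i Hi; apply ratio_le_iff; eauto using mv_ge0.
  - intros H; split; [exact Hs|]; intros i Hi; apply ratio_le_iff; eauto using mv_ge0.
Qed.

Lemma rq_lt_rows m n A B x t :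
  nonneg_mat m n A -> nonneg_mat m n B -> nonneg_vec n x ->
  ER_lt (rq m n A B x) (Fin t) ->
  forall i, (i < m)%nat ->
    mv n A x i < t * mv n B x i \/ (mv n A x i = 0 /\ mv n B x i = 0).
Proof.
  intros HA HB Hx Hlt i Hi.
  pose proof (rq_ge0 m n A B x) as H0.
  destruct (rq m n A B x) as [r|] eqn:Er; unfold ER_lt in Hlt; simpl in H0, Hlt; [|tauto].
  assert (Hr : ER_le (rq m n A B x) (Fin r)) by (rewrite Er; simpl; lra).
  rewrite rq_le_iff in Hr by (auto; lra); specialize (Hr i Hi).
  pose proof (mv_ge0 m n A x i HA Hx Hi); pose proof (mv_ge0 m n B x i HB Hx Hi).
  destruct (Req_EM_T (mv n B x i) 0) as [HB0|HB0]; [right | left]; nra.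
Qed.

Lemma ratio_scal c a b : 0 < c -> ratio (c * a) (c * b) = ratio a b.
Proof.
  intros Hc; unfold ratio.
  destruct (Req_EM_T b 0) as [Hb|Hb], (Req_EM_T (c * b) 0) as [Hcb|Hcb];
    try (exfalso; nra).
  - destruct (Req_EM_T a 0), (Req_EM_T (c * a) 0); try reflexivity; exfalso; nra.
  - f_equal; field; lra.
Qed.

Lemma rq_scal m n A B c x : 0 < c -> rq m n A B (fun j => c * x j) = rq m n A B x.
Proof.
  intros Hc; unfold rq.
  induction m as [|m IH]; simpl; [reflexivity|].
  rewrite IH, !mv_scal, ratio_scal by exact Hc; reflexivity.
Qed.

Section Quotients.

Variables (m n : nat) (A B : mat).

Let rq_set (P : vec -> Prop) : ER -> Prop := fun t => exists x, P x /\ t = rq m n A B x.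

Lemma rq_set_ge0 P s : rq_set P s -> ER_le (Fin 0) s.
Proof. intros [x [_ ->]]; apply rq_ge0. Qed.

Lemma rho_le_rq x : pos_vec n x -> ER_le (rho m n A B) (rq m n A B x).
Proof.
  intros Hx; apply (ER_inf_le (rq_set (pos_vec n))); [apply rq_set_ge0 | now exists x].
Qed.

Lemma rhohat_le_rq x : nonneg_nz_vec n x -> ER_le (rhohat m n A B) (rq m n A B x).
Proof.
  intros Hx; apply (ER_inf_le (rq_set (nonneg_nz_vec n))); [apply rq_set_ge0 | now exists x].
Qed.

Lemma le_rho w : (forall x, pos_vec n x -> ER_le w (rq m n A B x)) -> ER_le w (rho m n A B).
Proof.
  intros H; apply (ER_le_inf (rq_set (pos_vec n))); [apply rq_set_ge0|].
  intros s [x [Hx ->]]; auto.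
Qed.

Lemma le_rhohat w :
  (forall x, nonneg_nz_vec n x -> ER_le w (rq m n A B x)) -> ER_le w (rhohat m n A B).
Proof.
  intros H; apply (ER_le_inf (rq_set (nonneg_nz_vec n))); [apply rq_set_ge0|].
  intros s [x [Hx ->]]; auto.
Qed.

Lemma rho_ge0 : ER_le (Fin 0) (rho m n A B).
Proof. apply le_rho; intros; apply rq_ge0. Qed.

Lemma rho_lt t :
  ER_lt (rho m n A B) (Fin t) -> exists x, pos_vec n x /\ ER_lt (rq m n A B x) (Fin t).
Proof.
  intros H; destruct (ER_inf_lt _ (rq_set_ge0 (pos_vec n)) t H) as [s [[x [Hx ->]] Hs]].
  eauto.
Qed.

Lemma rhohat_lt t :
  ER_lt (rhohat m n A B) (Fin t) -> exists x, nonneg_nz_vec n x /\ ER_lt (rq m n A B x) (Fin t).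
Proof.
  intros H; destruct (ER_inf_lt _ (rq_set_ge0 (nonneg_nz_vec n)) t H) as [s [[x [Hx ->]] Hs]].
  eauto.
Qed.

End Quotients.

Definition eventually (P : nat -> Prop) : Prop := exists N, forall k, (N <= k)%nat -> P k.

Lemma eventually_mono (P Q : nat -> Prop) :
  (forall k, P k -> Q k) -> eventually P -> eventually Q.
Proof. intros H [N HN]; exists N; auto. Qed.

Lemma eventually_forall_lt m (P : nat -> nat -> Prop) :
  (forall i, (i < m)%nat -> eventually (P i)) ->
  eventually (fun k => forall i, (i < m)%nat -> P i k).
Proof.
  induction m as [|m IH]; intros H; [exists 0%nat; intros; lia|].
  destruct (IH (fun i Hi => H i ltac:(lia))) as [N1 H1], (H m ltac:(lia)) as [N2 H2].
  exists (max N1 N2); intros k Hk i Hi.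
  destruct (Nat.eq_dec i m) as [->|Hne]; [apply H2 | apply H1]; lia.
Qed.

Lemma not_eventually P : ~ eventually P -> forall N, exists k, (N <= k)%nat /\ ~ P k.
Proof.
  intros H N; apply NNPP; intros Hno; apply H; exists N; intros k Hk.
  apply NNPP; intros Hk'; apply Hno; eauto.
Qed.

Lemma eventually_lt_of_cv u v a b :
  Un_cv u a -> Un_cv v b -> a < b -> eventually (fun k => u k < v k).
Proof.
  intros Hu Hv Hab.
  destruct (CV_minus _ _ _ _ Hv Hu (b - a) ltac:(lra)) as [N HN].
  exists N; intros k Hk; specialize (HN k Hk); unfold R_dist in HN.
  apply Rabs_def2 in HN; lra.
Qed.

Lemma ER_cv_intro u v :
  (forall k, ER_le (Fin 0) (u k)) ->
  (forall t, ER_lt v (Fin t) -> eventually (fun k => ER_le (u k) (Fin t))) ->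
  (forall t, 0 < t -> ER_lt (Fin t) v -> eventually (fun k => ER_le (Fin t) (u k))) ->
  ER_cv u v.
Proof.
  intros H0 Hup Hlow; destruct v as [L|].
  - intros eps He.
    assert (Hlo : eventually (fun k => ER_le (Fin (L - eps / 2)) (u k))).
    { destruct (Rlt_le_dec 0 (L - eps / 2)) as [Hpos|Hneg].
      - apply Hlow; [exact Hpos | unfold ER_lt; simpl; lra].
      - exists 0%nat; intros k _; eapply ER_le_trans; [|apply H0]; simpl; exact Hneg. }
    destruct (Hup (L + eps / 2) ltac:(unfold ER_lt; simpl; lra)) as [N1 H1], Hlo as [N2 H2].
    exists (max N1 N2); intros k Hk.
    specialize (H1 k ltac:(lia)); specialize (H2 k ltac:(lia)).
    destruct (u k) as [x|]; simpl in H1, H2; [|tauto].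
    exists x; split; [reflexivity | apply Rabs_def1; lra].
  - intros M; destruct (Rlt_le_dec 0 M) as [HM|HM].
    + apply Hlow; [exact HM | unfold ER_lt; simpl; tauto].
    + exists 0%nat; intros k _; eapply ER_le_trans; [|apply H0]; simpl; exact HM.
Qed.

Lemma ER_le_of_cv u v w : (forall k, ER_le w (u k)) -> ER_cv u v -> ER_le w v.
Proof.
  intros Hw Hcv; destruct v as [L|]; [|destruct w; exact I].
  destruct w as [z|]; simpl.
  - apply Rnot_lt_le; intros Hlt.
    destruct (Hcv (z - L) ltac:(lra)) as [N HN]; destruct (HN N (le_n N)) as [y [Hy Hd]].
    specialize (Hw N); rewrite Hy in Hw; simpl in Hw; apply Rabs_def2 in Hd; lra.
  - destruct (Hcv 1 ltac:(lra)) as [N HN]; destruct (HN N (le_n N)) as [y [Hy _]].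
    specialize (Hw N); rewrite Hy in Hw; exact Hw.
Qed.

Section Semicontinuity.

Variables (m n : nat) (Ak Bk : nat -> mat) (xk : nat -> vec).
Hypotheses (HAk : forall k, nonneg_mat m n (Ak k)) (HBk : forall k, nonneg_mat m n (Bk k))
  (Hxk : forall k, nonneg_vec n (xk k)).

Lemma rq_eventually_le t :
  0 <= t ->
  (forall i, (i < m)%nat ->
     eventually (fun k => mv n (Ak k) (xk k) i <= t * mv n (Bk k) (xk k) i)) ->
  eventually (fun k => ER_le (rq m n (Ak k) (Bk k) (xk k)) (Fin t)).
Proof.
  intros Ht Hrows; eapply eventually_mono; [|exact (eventually_forall_lt m _ Hrows)].
  intros k Hk; apply rq_le_iff; auto.
Qed.

Lemma rq_eventually_gt A B x t :
  nonneg_mat m n A -> nonneg_mat m n B -> nonneg_vec n x -> 0 <= t ->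
  mat_cv m n Ak A -> mat_cv m n Bk B -> vec_cv n xk x ->
  ER_lt (Fin t) (rq m n A B x) ->
  eventually (fun k => ER_lt (Fin t) (rq m n (Ak k) (Bk k) (xk k))).
Proof.
  intros HA HB Hx Ht HcA HcB Hcx Hgt.
  assert (Hrow : exists i, (i < m)%nat /\ t * mv n B x i < mv n A x i).
  { apply NNPP; intros Hno; apply Hgt; apply rq_le_iff; auto.
    intros i Hi; apply Rnot_lt_le; intros Hlt; apply Hno; eauto. }
  destruct Hrow as [i [Hi Hlt]].
  apply (eventually_mono (fun k => t * mv n (Bk k) (xk k) i < mv n (Ak k) (xk k) i)).
  - intros k Hk Hle; rewrite rq_le_iff in Hle by auto; specialize (Hle i Hi); lra.
  - apply (eventually_lt_of_cv _ _ _ _ (Un_cv_scal t _ _ (mv_cv _ _ _ _ _ _ _ HcB Hcx Hi))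
             (mv_cv _ _ _ _ _ _ _ HcA Hcx Hi) Hlt).
Qed.

End Semicontinuity.

Definition perturb (x : vec) (k : nat) : vec := fun j => x j + RinvN k.

Lemma perturb_pos n x k : nonneg_vec n x -> pos_vec n (perturb x k).
Proof.
  intros Hx j Hj; unfold perturb; specialize (Hx j Hj); pose proof (RinvN_pos k); simpl; lra.
Qed.

Lemma perturb_cv n x : vec_cv n (perturb x) x.
Proof.
  intros j _; unfold perturb.
  pose proof (CV_plus _ _ _ _ (Un_cv_const (x j)) RinvN_cv) as H.
  rewrite Rplus_0_r in H; exact H.
Qed.

Definition pos_rows (m n : nat) (A : mat) (x : vec) : Prop :=
  forall i, (i < m)%nat -> 0 < mv n A x i.

Section Perturbation.

Variables (m n : nat) (A B : mat) (y : vec).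
Hypotheses (HA : nonneg_mat m n A) (HB : nonneg_mat m n B) (Hy : nonneg_vec n y)
  (Hrows : pos_rows m n A y \/ pos_rows m n B y).

Lemma rq_perturb_cv : ER_cv (fun k => rq m n A B (perturb y k)) (rq m n A B y).
Proof.
  assert (Hpk : forall k, nonneg_vec n (perturb y k))
    by (intros k j Hj; left; apply (perturb_pos n y k Hy j Hj)).
  apply ER_cv_intro; [intros; apply rq_ge0 | |].
  - intros t Hlt.
    apply rq_eventually_le; auto; [left; eapply ER_lt_Fin_pos; [apply rq_ge0 | exact Hlt]|].
    intros i Hi; destruct (rq_lt_rows m n A B y t HA HB Hy Hlt i Hi) as [Hrow|[HA0 HB0]].
    + pose proof (mv_cv m n _ _ _ _ i (mat_cv_const m n A) (perturb_cv n y) Hi) as HcvA.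
      pose proof (mv_cv m n _ _ _ _ i (mat_cv_const m n B) (perturb_cv n y) Hi) as HcvB.
      eapply eventually_mono;
        [|exact (eventually_lt_of_cv _ _ _ _ HcvA (Un_cv_scal t _ _ HcvB) Hrow)].
      intros; lra.
    + exfalso; destruct Hrows as [H|H]; specialize (H i Hi); lra.
  - intros t Ht Hgt.
    apply (eventually_mono _ _ (fun k => ER_lt_le _ _)).
    apply (rq_eventually_gt m n (fun _ => A) (fun _ => B) (perturb y) (fun _ => HA) (fun _ => HB)
             Hpk A B y); auto using mat_cv_const, perturb_cv; lra.
Qed.

Lemma rho_le_rq_of_pos_rows : ER_le (rho m n A B) (rq m n A B y).
Proof.
  apply (ER_le_of_cv _ _ _ (fun k => rho_le_rq m n A B _ (perturb_pos n y k Hy)) rq_perturb_cv).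
Qed.

End Perturbation.

Lemma rhohat_le_rho m n A B : (0 < n)%nat -> ER_le (rhohat m n A B) (rho m n A B).
Proof.
  intros Hn; apply le_rho; intros x Hx; apply rhohat_le_rq.
  split; [intros j Hj; left; auto | exists 0%nat; split; [exact Hn | apply Rgt_not_eq, Hx, Hn]].
Qed.

Lemma weakly_optimal_pos_rows_optimal m n A B y :
  (0 < n)%nat -> nonneg_mat m n A -> nonneg_mat m n B -> weakly_optimal m n A B y ->
  pos_rows m n A y \/ pos_rows m n B y ->
  rho m n A B = rhohat m n A B /\ optimal m n A B y.
Proof.
  intros Hn HA HB [Hy Hopt] Hrows.
  assert (Heq : rho m n A B = rhohat m n A B).
  { apply ER_le_antisym; [|apply rhohat_le_rho, Hn].
    rewrite <- Hopt; apply rho_le_rq_of_pos_rows; auto; exact (proj1 Hy). }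
  split; [exact Heq|]; split; [exact Hy|].
  rewrite Heq, <- Hopt; split; [reflexivity|].
  exists (perturb y); split; [intros k; exact (perturb_pos n y k (proj1 Hy))|].
  split; [apply perturb_cv | apply rq_perturb_cv; auto; exact (proj1 Hy)].
Qed.

Lemma pos_mat_pos_rows m n A x :
  pos_mat m n A -> nonneg_nz_vec n x -> pos_rows m n A x.
Proof.
  intros HA [Hx [j [Hj Hxj]]] i Hi.
  apply (mv_pos m n A x i j); auto; [intros i' j' Hi' Hj'; left; auto|].
  apply Rmult_lt_0_compat; [auto | specialize (Hx j Hj); lra].
Qed.

Lemma rho_eq_rhohat_of_pos_rows m n A B :
  (0 < n)%nat -> nonneg_mat m n A -> nonneg_mat m n B ->
  (forall x, nonneg_nz_vec n x -> pos_rows m n A x \/ pos_rows m n B x) ->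
  rho m n A B = rhohat m n A B.
Proof.
  intros Hn HA HB Hrows; apply ER_le_antisym; [|apply rhohat_le_rho, Hn].
  apply le_rhohat; intros x Hx; apply rho_le_rq_of_pos_rows; auto; exact (proj1 Hx).
Qed.

Lemma bounded_seq_cv_subseq a b (u : nat -> R) :
  (forall k, a <= u k <= b) ->
  exists (phi : nat -> nat) l, (forall k, (k <= phi k)%nat) /\ Un_cv (fun k => u (phi k)) l.
Proof.
  intros Hu; destruct (Bolzano_Weierstrass u _ (compact_P3 a b) Hu) as [l Hl].
  assert (Hclose : forall k, exists p, (k <= p)%nat /\ Rabs (u p - l) < RinvN k).
  { intros k; destruct (Hl (disc l (RinvN k)) k) as [p Hp]; [|now exists p].
    exists (RinvN k); intros z Hz; exact Hz. }
  destruct (choice _ Hclose) as [phi Hphi].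
  exists phi, l; split; [intros k; apply Hphi|].
  intros eps He; destruct (RinvN_cv He) as [N HN]; exists N; intros k Hk.
  specialize (HN k Hk); unfold R_dist in *; rewrite Rminus_0_r, Rabs_pos_eq in HN
    by (left; apply cond_pos).
  destruct (Hphi k) as [_ Hk']; lra.
Qed.

Lemma bounded_vec_seq_cv_subseq n a b (z : nat -> vec) :
  (forall k j, (j < n)%nat -> a <= z k j <= b) ->
  exists (phi : nat -> nat) z0, (forall k, (k <= phi k)%nat) /\ vec_cv n (fun k => z (phi k)) z0.
Proof.
  induction n as [|n IH]; intros Hz.
  - exists (fun k => k), (fun _ => 0); split; [auto | intros j Hj; lia].
  - destruct IH as [phi [z0 [Hphi Hcv]]]; [intros k j Hj; apply Hz; lia|].
    destruct (bounded_seq_cv_subseq a b (fun k => z (phi k) n)) as [psi [l [Hpsi Hl]]];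
      [intros k; apply Hz; lia|].
    exists (fun k => phi (psi k)), (fun j => if Nat.eq_dec j n then l else z0 j); split.
    + intros k; specialize (Hphi (psi k)); specialize (Hpsi k); lia.
    + intros j Hj; destruct (Nat.eq_dec j n) as [->|Hne]; [exact Hl|].
      apply (Un_cv_subseq (fun k => z (phi k) j)); [apply Hcv; lia | exact Hpsi].
Qed.

Definition simplex (n : nat) (z : vec) : Prop := nonneg_vec n z /\ rsum n z = 1.

Lemma simplex_bounds n z j : simplex n z -> (j < n)%nat -> 0 <= z j <= 1.
Proof.
  intros [Hz Hsum] Hj; split; [auto|].
  rewrite <- Hsum; apply rsum_ge_term; auto.
Qed.

Lemma simplex_nonneg_nz n z : simplex n z -> nonneg_nz_vec n z.
Proof.
  intros [Hz Hsum]; split; [exact Hz|].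
  apply NNPP; intros Hno.
  assert (Hzero : rsum n z = rsum n (fun j => 0 * z j)).
  { apply rsum_ext; intros j Hj; rewrite Rmult_0_l; apply NNPP; intros Hne; apply Hno; eauto. }
  rewrite rsum_scal, Rmult_0_l in Hzero; lra.
Qed.

Lemma simplex_closed n zk z : (forall k, simplex n (zk k)) -> vec_cv n zk z -> simplex n z.
Proof.
  intros Hzk Hcv; split.
  - intros j Hj; apply (@Rle_cv_lim (fun _ => 0) (fun k => zk k j)); auto using Un_cv_const.
    intros k; apply Hzk, Hj.
  - apply (UL_sequence (fun k => rsum n (zk k))); [apply rsum_cv, Hcv|].
    apply (Un_cv_ext (fun _ => 1)); [intros k; symmetry; apply Hzk | apply Un_cv_const].
Qed.

Lemma simplex_normalize n x :
  (0 < n)%nat -> pos_vec n x -> exists c, 0 < c /\ simplex n (fun j => c * x j).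
Proof.
  intros Hn Hx.
  assert (Hsum : 0 < rsum n x).
  { eapply Rlt_le_trans; [apply (Hx 0%nat Hn)|].
    apply rsum_ge_term; [intros j Hj; left; auto | exact Hn]. }
  exists (/ rsum n x); split; [apply Rinv_0_lt_compat, Hsum|split].
  - intros j Hj; apply Rmult_le_pos; [left; apply Rinv_0_lt_compat, Hsum | left; auto].
  - rewrite rsum_scal; field; lra.
Qed.

Lemma rhohat_le_of_frequently m n A B Bl t :
  (0 < n)%nat -> nonneg_mat m n A -> nonneg_mat m n B ->
  (forall l, nonneg_mat m n (Bl l)) -> mat_cv m n Bl B -> 0 <= t ->
  (forall N, exists l x, (N <= l)%nat /\ pos_vec n x /\ ER_le (rq m n A (Bl l) x) (Fin t)) ->
  ER_le (rhohat m n A B) (Fin t).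
Proof.
  intros Hn HA HB HBl Hcv Ht Hfreq.
  assert (Hpick : forall N, exists p : nat * vec, (N <= fst p)%nat /\ simplex n (snd p) /\
                      ER_le (rq m n A (Bl (fst p)) (snd p)) (Fin t)).
  { intros N; destruct (Hfreq N) as [l [x [Hl [Hx Hle]]]].
    destruct (simplex_normalize n x Hn Hx) as [c [Hc Hz]].
    exists (l, fun j => c * x j); simpl; rewrite rq_scal by exact Hc; auto. }
  destruct (choice _ Hpick) as [p Hp].
  set (lk := fun k => fst (p k)); set (zk := fun k => snd (p k)).
  destruct (bounded_vec_seq_cv_subseq n 0 1 zk) as [phi [z [Hphi Hzcv]]].
  { intros k j Hj; apply (simplex_bounds n); [apply Hp | exact Hj]. }
  assert (Hz : simplex n z)
    by (apply (simplex_closed n (fun k => zk (phi k))); [intros; apply Hp | exact Hzcv]).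
  apply (ER_le_trans _ _ _ (rhohat_le_rq m n A B z (simplex_nonneg_nz n z Hz))).
  (* sublevel sets of rq are closed *)
  apply NNPP; intros Hgt.
  assert (HBcv : mat_cv m n (fun k => Bl (lk (phi k))) B).
  { intros i j Hi Hj; apply (Un_cv_subseq (fun l => Bl l i j)); [apply Hcv; auto|].
    intros k; specialize (Hphi k); destruct (Hp (phi k)) as [Hk _]; unfold lk; lia. }
  destruct (rq_eventually_gt m n (fun _ => A) (fun k => Bl (lk (phi k))) (fun k => zk (phi k))
              (fun _ => HA) (fun k => HBl _) (fun k => proj1 (proj1 (proj2 (Hp (phi k))))) A B z t)
    as [N HN]; auto using mat_cv_const; [exact (proj1 Hz)|].
  exact (HN N (le_n N) (proj2 (proj2 (Hp (phi N))))).
Qed.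

Lemma rho_cv_rhohat m n A B Bl :
  (0 < n)%nat -> nonneg_mat m n A -> nonneg_mat m n B ->
  (forall l, pos_mat m n (Bl l)) -> mat_cv m n Bl B ->
  ER_cv (fun l => rho m n A (Bl l)) (rhohat m n A B).
Proof.
  intros Hn HA HB HBl Hcv.
  assert (HBl' : forall l, nonneg_mat m n (Bl l)) by (intros l i j Hi Hj; left; apply HBl; auto).
  apply ER_cv_intro; [intros; apply rho_ge0 | |].
  - intros t Hlt; destruct (rhohat_lt m n A B t Hlt) as [y [Hy Hyt]].
    assert (Ht : 0 < t) by (eapply ER_lt_Fin_pos; [apply rq_ge0 | exact Hyt]).
    apply (eventually_mono (fun l => ER_le (rq m n A (Bl l) y) (Fin t))).
    { intros l Hl; eapply ER_le_trans; [|exact Hl].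
      apply rho_le_rq_of_pos_rows; auto; [exact (proj1 Hy) | right; apply pos_mat_pos_rows; auto]. }
    apply rq_eventually_le; auto; [intros; exact (proj1 Hy) | lra|].
    intros i Hi; destruct (rq_lt_rows m n A B y t HA HB (proj1 Hy) Hyt i Hi) as [Hrow|[HA0 _]].
    + apply (eventually_mono (fun l => mv n A y i < t * mv n (Bl l) y i)); [intros; lra|].
      apply (eventually_lt_of_cv _ _ _ _ (Un_cv_const _)
               (Un_cv_scal t _ _ (mv_cv m n _ _ _ _ _ Hcv (vec_cv_const n y) Hi)) Hrow).
    + exists 0%nat; intros l _; rewrite HA0.
      apply Rmult_le_pos; [lra | apply mv_ge0 with m; auto; exact (proj1 Hy)].
  - intros t Ht Hgt; apply NNPP; intros Hnot; apply Hgt.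
    apply (rhohat_le_of_frequently m n A B Bl t); auto; [lra|].
    intros N; destruct (not_eventually _ Hnot N) as [l [Hl Hrho]].
    destruct (rho_lt m n A (Bl l) t Hrho) as [x [Hx Hxt]].
    exists l, x; auto using ER_lt_le.
Qed.

Lemma eventually_le_scal_entrywise m n A Al c :
  1 < c -> nonneg_mat m n A -> (forall l, nonneg_mat m n (Al l)) -> mat_cv m n Al A ->
  eventually (fun l => forall i j, (i < m)%nat -> (j < n)%nat -> A i j <= c * Al l i j).
Proof.
  intros Hc HA HAl Hcv.
  apply (eventually_mono
           (fun l => forall i, (i < m)%nat -> forall j, (j < n)%nat -> A i j <= c * Al l i j));
    [auto|].
  apply eventually_forall_lt; intros i Hi; apply eventually_forall_lt; intros j Hj.
  destruct (HA i j Hi Hj) as [Hpos|H0].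
  - apply (eventually_mono (fun l => A i j < c * Al l i j)); [intros; lra|].
    apply (eventually_lt_of_cv _ _ _ _ (Un_cv_const _) (Un_cv_scal c _ _ (Hcv i j Hi Hj))); nra.
  - exists 0%nat; intros l _; rewrite <- H0; specialize (HAl l i j Hi Hj); nra.
Qed.

Lemma rq_le_scal_of_entrywise m n A A' B x c t :
  nonneg_mat m n A -> nonneg_mat m n A' -> nonneg_mat m n B -> nonneg_vec n x ->
  0 <= c -> 0 <= t -> (forall i j, (i < m)%nat -> (j < n)%nat -> A i j <= c * A' i j) ->
  ER_le (rq m n A' B x) (Fin t) -> ER_le (rq m n A B x) (Fin (c * t)).
Proof.
  intros HA HA' HB Hx Hc Ht Hle; rewrite !rq_le_iff by (auto; nra); intros Hrq i Hi.
  eapply Rle_trans; [apply mv_le_scal; auto|].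
  rewrite Rmult_assoc; apply Rmult_le_compat_l; auto.
Qed.

Lemma rho_cv_of_left_cv m n A B Al :
  nonneg_mat m n A -> nonneg_mat m n B ->
  (forall l, pos_mat m n (Al l)) -> mat_cv m n Al A -> no_zero_row m n B ->
  ER_cv (fun l => rho m n (Al l) B) (rho m n A B).
Proof.
  intros HA HB HAl Hcv Hrow.
  assert (HAl' : forall l, nonneg_mat m n (Al l)) by (intros l i j Hi Hj; left; apply HAl; auto).
  apply ER_cv_intro; [intros; apply rho_ge0 | |].
  - intros t Hlt; destruct (rho_lt m n A B t Hlt) as [x [Hx Hxt]].
    assert (Hx' : nonneg_vec n x) by (intros j Hj; left; auto).
    assert (Ht : 0 < t) by (eapply ER_lt_Fin_pos; [apply rq_ge0 | exact Hxt]).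
    apply (eventually_mono _ _ (fun l Hl => ER_le_trans _ _ _ (rho_le_rq m n (Al l) B x Hx) Hl)).
    apply rq_eventually_le; auto; [lra|].
    intros i Hi; destruct (rq_lt_rows m n A B x t HA HB Hx' Hxt i Hi) as [Hlt'|[_ HB0]].
    + apply (eventually_mono (fun l => mv n (Al l) x i < t * mv n B x i)); [intros; lra|].
      apply (eventually_lt_of_cv _ _ _ _ (mv_cv m n _ _ _ _ _ Hcv (vec_cv_const n x) Hi)
               (Un_cv_const _) Hlt').
    + exfalso; destruct (Hrow i Hi) as [j [Hj HBij]].
      assert (0 < mv n B x i); [|lra].
      apply (mv_pos m n B x i j); auto.
      apply Rmult_lt_0_compat; auto; destruct (HB i j Hi Hj); [auto | congruence].
  - intros t Ht Hgt; destruct (ER_lt_Fin_interpolate _ _ Hgt) as [t' [Htt' Hgt']].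
    set (c := t' / t).
    assert (Hct : c * t = t') by (unfold c; field; lra).
    assert (Hc : 1 < c) by (apply Rmult_lt_reg_r with t; lra).
    eapply eventually_mono; [|exact (eventually_le_scal_entrywise m n A Al c Hc HA HAl' Hcv)].
    intros l Hl; cbv beta in Hl |- *.
    apply le_rho; intros x Hx; apply NNPP; intros Hnot; apply Hgt'.
    rewrite <- Hct; eapply ER_le_trans; [apply rho_le_rq, Hx|].
    apply (rq_le_scal_of_entrywise m n A (Al l)); auto; try lra.
    + intros j Hj; left; auto.
    + apply ER_lt_le, Hnot.
Qed.

Theorem lemma2p5 (m n : nat) (A B : mat)
  (hn : (0 < n)%nat) (hA : nonneg_mat m n A) (hB : nonneg_mat m n B) :
  (* (1) *)
  ER_le (rhohat m n A B) (rho m n A B) /\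
  (* (2) *)
  (forall y, weakly_optimal m n A B y ->
     ((forall i, (i < m)%nat -> 0 < mv n A y i) \/
      (forall i, (i < m)%nat -> 0 < mv n B y i)) ->
     rho m n A B = rhohat m n A B /\ optimal m n A B y) /\
  (* (3) *)
  (pos_mat m n A \/ pos_mat m n B ->
     rho m n A B = rhohat m n A B /\
     (forall y, weakly_optimal m n A B y -> optimal m n A B y)) /\
  (* (4) *)
  (forall Bl : nat -> mat, (forall l, pos_mat m n (Bl l)) -> mat_cv m n Bl B ->
     ER_cv (fun l => rho m n A (Bl l)) (rhohat m n A B)) /\
  (* (5) *)
  (forall Al : nat -> mat, (forall l, pos_mat m n (Al l)) -> mat_cv m n Al A ->
     no_zero_row m n B ->
     ER_cv (fun l => rho m n (Al l) B) (rho m n A B)).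
Proof.
  split; [exact (rhohat_le_rho m n A B hn)|].
  split; [intros y; exact (weakly_optimal_pos_rows_optimal m n A B y hn hA hB)|].
  split.
  { intros Hpos.
    assert (Hrows : forall x, nonneg_nz_vec n x -> pos_rows m n A x \/ pos_rows m n B x)
      by (intros x Hx; destruct Hpos; [left | right]; apply pos_mat_pos_rows; auto).
    split; [exact (rho_eq_rhohat_of_pos_rows m n A B hn hA hB Hrows)|].
    intros y Hy; apply (weakly_optimal_pos_rows_optimal m n A B y hn hA hB Hy), Hrows, Hy. }
  split; [intros Bl; exact (rho_cv_rhohat m n A B Bl hn hA hB)|].
  intros Al; exact (rho_cv_of_left_cv m n A B Al hA hB).
Qed.
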